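(* Suppose the random walk $R$ is irreducible, aperiodic, positive recurrent and has negative drift. Let $\mu(n)=\mu_0+\sum_{i=1}^M\mu_i n_i$ with $\mu_0\ge1$ and $\mu_1,\dots,\mu_M\ge0$. Define $\mu^*=\max_{i=0,\dots,M}\mu_i$, $$v_i=\frac{-\mu^*}{\sup_{n\in S:\,i\in I(n)}\{s^+_i(n)-s^-_i(n)\}}\ (i=1,\dots,M),\qquad V(n)=\sum_{i=1}^M v_i n_i^2,$$ $$b=\mu_0+\sum_{i=1}^M v_i,\qquad B=\Big\{n\in S:\ n_i\le\frac{\mu_0+\sum_{l=1}^M v_l}{\mu^*}\ \ \forall i=1,\dots,M\Big\}.$$ Then $0\le v_i<\infty$, $V:S\to[0,\infty)$, $B$ is finite, and for all $n\in S$, $$\sum_{u\in N_{c(n)}}p_{c(n),u}V(n+u)-V(n)\le-\mu(n)+b\,\mathbf 1_B(n),$$ i.e. $R$ is $\mu$-ergodic.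
   Context: Let $M\ge 1$ and $S=\{0,1,2,\dots\}^M$. For $n\in S$ let $N(n)=\{u\in\{-1,0,1\}^M: n+u\in S\}$. A partition $C=\{C_k\}_{k\in K}$ ($K$ finite) of $S$ is a family of pairwise disjoint sets covering $S$ such that $N(n)=N(n')$ whenever $n,n'$ lie in the same $C_k$; write $N_k$ for this common set and $c(n)$ for the index $k$ with $n\in C_k$. The random walk $R$ is a discrete-time Markov chain on $S$ with transition probabilities $P(n,n+u)=p_{c(n),u}\ge0$ for $u\in N_{c(n)}$, $P(n,m)=0$ if $m-n\notin N_{c(n)}$, and $\sum_{u\in N_k}p_{k,u}=1$ for every $k$. For $n\in S$, $I(n)=\{i\in\{1,\dots,M\}: n_i>0\}$, $s^+_i(n)=\sum_{u\in N_{c(n)}:u_i=1}p_{c(n),u}$ and $s^-_i(n)=\sum_{u\in N_{c(n)}:u_i=-1}p_{c(n),u}$. $R$ has negative drift if $\sup_{n\in S,\,i\in I(n)}\{s^+_i(n)-s^-_i(n)\}<0$. *)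

From Stdlib Require Import Reals ZArith ClassicalEpsilon.
From mathcomp Require Import all_boot.
Local Open Scope R_scope.
Set Implicit Arguments. Unset Strict Implicit. Unset Printing Implicit Defensive.

Definition pt (M : nat) := {ffun 'I_M -> nat}.
(* a step u in {-1,0,1}^M is encoded by j : 'I_3 in each coordinate, u_i = j - 1 *)
Definition dir (M : nat) := {ffun 'I_M -> 'I_3}.
Definition du M (u : dir M) (i : 'I_M) : Z := (Z.of_nat (nat_of_ord (u i)) - 1)%Z.

Definition Nset M (n : pt M) : pred (dir M) :=
  fun u => [forall i, Z.leb 0 (Z.of_nat (n i) + du u i)].

(* n + u (meaningful when u \in Nset n) *)
Definition add_step M (n : pt M) (u : dir M) : pt M :=
  [ffun i => Z.to_nat (Z.of_nat (n i) + du u i)].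

Notation "\rsum_ ( i | P ) F" := (\big[Rplus/0]_(i | P) F)
  (at level 41, F at level 41, i at level 50).
Notation "\rsum_ ( i < n ) F" := (\big[Rplus/0]_(i < n) F)
  (at level 41, F at level 41, i, n at level 50).

(* ---------- the random walk R ----------
   K : finite index set of the partition, c : S -> K the class map,
   Nk : K -> set of steps (N_k), p : K -> step -> R the transition
   probabilities p_{k,u}. *)
Record rwalk (M : nat) := RWalk {
  K : finType;
  c : pt M -> K;
  Nk : K -> pred (dir M);
  p : K -> dir M -> R
}.
Arguments K {M} r.
Arguments c {M} r _.
Arguments Nk {M} r _.
Arguments p {M} r _ _.

Definition rwalk_ok M (W : rwalk M) : Prop :=
  (forall n : pt M, forall u, (u \in Nk W (c W n)) = (u \in Nset n)) /\
  (forall k u, u \in Nk W k -> (0 <= p W k u)) /\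
  (forall k, \rsum_(u | u \in Nk W k) p W k u = 1).

Definition P1 M (W : rwalk M) (n m : pt M) : R :=
  \rsum_(u | (u \in Nk W (c W n)) && (add_step n u == m)) p W (c W n) u.

Fixpoint Pt M (W : rwalk M) (t : nat) (n m : pt M) : R :=
  match t with
  | 0 => if n == m then 1 else 0
  | t'.+1 => \rsum_(u | u \in Nk W (c W n)) (p W (c W n) u * Pt W t' (add_step n u) m)
  end.

(* first-passage probability: F t n m = P(first visit to m at time t | start n), t >= 1 *)
Fixpoint Ft M (W : rwalk M) (t : nat) (n m : pt M) : R :=
  match t with
  | 0 => 0
  | 1 => P1 W n m
  | t'.+1 => \rsum_(u | u \in Nk W (c W n))
               (p W (c W n) u * (if add_step n u == m then 0 else Ft W t' (add_step n u) m))
  end.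

Definition irreducible M (W : rwalk M) : Prop :=
  forall n m : pt M, exists t, (0 < Pt W t n m).

Definition aperiodic M (W : rwalk M) : Prop :=
  forall n : pt M, forall d : nat,
    (forall t, (0 < t)%N -> (0 < Pt W t n n) -> (d %| t)%N) -> d = 1%N.

Definition positive_recurrent M (W : rwalk M) : Prop :=
  forall n : pt M,
    infinite_sum (fun t => Ft W t n n) 1 /\
    exists L, infinite_sum (fun t => (INR t * Ft W t n n)) L.

Definition splus M (W : rwalk M) (i : 'I_M) (n : pt M) : R :=
  \rsum_(u | (u \in Nk W (c W n)) && Z.eqb (du u i) 1) p W (c W n) u.
Definition sminus M (W : rwalk M) (i : 'I_M) (n : pt M) : R :=
  \rsum_(u | (u \in Nk W (c W n)) && Z.eqb (du u i) (-1)) p W (c W n) u.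

(* supremum of a subset of R (the least upper bound when it exists;
   an arbitrary value 0 otherwise -- never used in that case) *)
Definition supR (E : R -> Prop) : R :=
  match excluded_middle_informative (bound E /\ exists x, E x) with
  | left H => proj1_sig (completeness E (proj1 H) (proj2 H))
  | right _ => 0
  end.

Definition drift_set M (W : rwalk M) : R -> Prop :=
  fun r => exists (n : pt M) (i : 'I_M), (0 < n i)%N /\ r = (splus W i n - sminus W i n).
Definition drift_set_i M (W : rwalk M) (i : 'I_M) : R -> Prop :=
  fun r => exists (n : pt M), (0 < n i)%N /\ r = (splus W i n - sminus W i n).

Definition negative_drift M (W : rwalk M) : Prop := (supR (drift_set W) < 0).

Definition mu_fun M (mu0 : R) (mu : 'I_M -> R) (n : pt M) : R :=
  (mu0 + \rsum_(i < M) (mu i * INR (n i))).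
Definition mu_star M (mu0 : R) (mu : 'I_M -> R) : R :=
  \big[Rmax/mu0]_(i < M) mu i.
Definition vcoef M (W : rwalk M) (mu0 : R) (mu : 'I_M -> R) (i : 'I_M) : R :=
  (- mu_star mu0 mu / supR (drift_set_i W i)).
Definition Vfun M (W : rwalk M) (mu0 : R) (mu : 'I_M -> R) (n : pt M) : R :=
  \rsum_(i < M) (vcoef W mu0 mu i * INR (n i) ^ 2).
Definition bconst M (W : rwalk M) (mu0 : R) (mu : 'I_M -> R) : R :=
  (mu0 + \rsum_(i < M) vcoef W mu0 mu i).
Definition inB M (W : rwalk M) (mu0 : R) (mu : 'I_M -> R) (n : pt M) : bool :=
  [forall i, if Rle_dec (INR (n i)) (bconst W mu0 mu / mu_star mu0 mu)
             then true else false].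

From Stdlib Require Import Reals ZArith Lra Lia ClassicalEpsilon.
From HB Require Import structures.
From mathcomp Require Import all_boot.
Local Open Scope R_scope.
Set Implicit Arguments. Unset Strict Implicit. Unset Printing Implicit Defensive.

(* The argument is a one-step computation coordinate by
   coordinate.  Since a step changes n_i by d in {-1,0,1}, d^2 <= 1, and the
   step probabilities sum to one,
       E[(n_i + u_i)^2] - n_i^2 <= 2 n_i (s^+_i(n) - s^-_i(n)) + 1.
   If n_i > 0 the drift s^+_i - s^-_i is at most sup_i := sup of the drifts
   in coordinate i, which is negative because it is dominated by the global
   (negative) supremum; with v_i = -mu^*/sup_i >= 0 this gives
       v_i (E[(n_i + u_i)^2] - n_i^2) <= v_i - 2 mu^* n_i,
   an estimate which is trivial when n_i = 0.  Summing over i (V is linear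
   in the squares n_i^2) yields  E[V(n+u)] - V(n) <= (b - mu_0) - 2 mu^* |n|
   with |n| = sum_i n_i, and -mu(n) >= -mu_0 - mu^* |n|.  It remains to see
   b - mu^* |n| <= b 1_B(n): outside B some n_j exceeds b / mu^*.  Finiteness
   of B is a counting argument: B lies in the image of the finite box
   {0..K}^M with K = up(b / mu^* ). *)

HB.instance Definition _ := Monoid.isComLaw.Build R 0 Rplus
  (fun a b c => esym (Rplus_assoc a b c)) Rplus_comm Rplus_0_l.

Section RealSums.

Variable I : finType.

Lemma rsum_le (P : pred I) (F G : I -> R) :
  (forall i, P i -> F i <= G i) -> \rsum_(i | P i) F i <= \rsum_(i | P i) G i.
Proof. by move=> FG; apply: (big_ind2 (fun a b => a <= b)) => // *; lra. Qed.

Lemma rsum_ge0 (P : pred I) (F : I -> R) :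
  (forall i, P i -> 0 <= F i) -> 0 <= \rsum_(i | P i) F i.
Proof. by move=> F0; apply: (big_ind (fun a => 0 <= a)) => // *; lra. Qed.

Lemma rsum_scal (P : pred I) (F : I -> R) a :
  \rsum_(i | P i) (a * F i) = a * \rsum_(i | P i) F i.
Proof. by apply: (big_rec2 (fun x y => x = a * y)) => [|i y1 y2 _ ->]; ring. Qed.

Lemma rsum_term_le (P : pred I) (F : I -> R) j :
  P j -> (forall i, P i -> 0 <= F i) -> F j <= \rsum_(i | P i) F i.
Proof.
move=> Pj F0; rewrite (bigD1 j) //=.
have : 0 <= \rsum_(i | P i && (i != j)) F i by apply: rsum_ge0 => i /andP [/F0].
lra.
Qed.

End RealSums.

Lemma supR_lub E : bound E -> (exists x, E x) -> is_lub E (supR E).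
Proof.
move=> Eb Ene; rewrite /supR; case: excluded_middle_informative => [H|]; last tauto.
by case: completeness.
Qed.

(* A negative supR can only come from a bounded nonempty set (the default
   value in the degenerate case is 0). *)
Lemma supR_neg_bound E : supR E < 0 -> bound E /\ exists x, E x.
Proof. by rewrite /supR; case: excluded_middle_informative => //= _; lra. Qed.

Lemma mu_star_ge_mu0 M mu0 (mu : 'I_M -> R) : mu0 <= mu_star mu0 mu.
Proof.
apply: (big_rec (fun a => mu0 <= a)) => [|i x _ h]; first lra.
exact: Rle_trans h (Rmax_r _ _).
Qed.

Lemma mu_star_ge M mu0 (mu : 'I_M -> R) j : mu j <= mu_star mu0 mu.
Proof.
rewrite /mu_star; have : j \in index_enum 'I_M by rewrite mem_index_enum.
elim: (index_enum 'I_M) => // a s IH; rewrite inE big_cons => /orP [/eqP ->|js].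
  exact: Rmax_l.
exact: Rle_trans (IH js) (Rmax_r _ _).
Qed.

Lemma du_cases M (u : dir M) i : du u i = (-1)%Z \/ du u i = 0%Z \/ du u i = 1%Z.
Proof. by rewrite /du; case: (u i) => [[|[|[|k]]] hk] //=; lia. Qed.

Lemma du_sq_le1 M (u : dir M) i : IZR (du u i) ^ 2 <= 1.
Proof. by case: (du_cases u i) => [->|[->|->]] /=; lra. Qed.

(* For an admissible step the coordinates of n + u are n_i + u_i (no truncation). *)
Lemma add_step_val M (n : pt M) (u : dir M) i : u \in Nset n ->
  INR (add_step n u i) = INR (n i) + IZR (du u i).
Proof.
move=> /forallP /(_ i) /Z.leb_le nu_ge0; rewrite ffunE.
by rewrite INR_IZR_INZ Z2Nat.id // plus_IZR -INR_IZR_INZ.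
Qed.

Lemma box_finite M (r : R) :
  exists s : seq (pt M), forall n : pt M, (forall i, INR (n i) <= r) -> n \in s.
Proof.
set K0 := Z.to_nat (up r).
exists (map (fun f : {ffun 'I_M -> 'I_K0.+1} => [ffun i => nat_of_ord (f i)] : pt M)
            (enum {ffun 'I_M -> 'I_K0.+1})).
move=> n n_le.
have n_lt i : (n i < K0.+1)%N.
  have /lt_IZR lt_up : IZR (Z.of_nat (n i)) < IZR (up r).
    by rewrite -INR_IZR_INZ; apply: Rle_lt_trans (n_le i) (proj1 (archimed r)).
  by apply/ltP; rewrite /K0; lia.
have -> : n = [ffun i => nat_of_ord ([ffun j => (inord (n j) : 'I_K0.+1)] i)].
  by apply/ffunP => i; rewrite !ffunE inordK.
by apply: map_f; rewrite mem_enum.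
Qed.

Section OneStep.

Variables (M : nat) (W : rwalk M).
Hypothesis W_ok : rwalk_ok W.

Lemma mean_increment (n : pt M) i :
  \rsum_(u | u \in Nk W (c W n)) (p W (c W n) u * IZR (du u i)) = splus W i n - sminus W i n.
Proof.
rewrite /splus /sminus !big_mkcondr.
transitivity (\rsum_(u | u \in Nk W (c W n))
   ((if Z.eqb (du u i) 1 then p W (c W n) u else 0) +
    (-1) * (if Z.eqb (du u i) (-1) then p W (c W n) u else 0))).
  by apply: eq_bigr => u _; case: (du_cases u i) => [->|[->|->]] /=; lra.
by rewrite big_split rsum_scal /=; ring.
Qed.

Lemma square_increment (n : pt M) i :
  \rsum_(u | u \in Nk W (c W n)) (p W (c W n) u * INR (add_step n u i) ^ 2) - INR (n i) ^ 2
  <= 2 * INR (n i) * (splus W i n - sminus W i n) + 1.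
Proof.
have [N_ok [p_ge0 p_sum1]] := W_ok.
set x := INR (n i); set q := p W (c W n).
have : \rsum_(u | u \in Nk W (c W n)) (q u * INR (add_step n u i) ^ 2) <=
       \rsum_(u | u \in Nk W (c W n))
         ((x ^ 2 * q u + (2 * x) * (q u * IZR (du u i))) + q u).
  apply: rsum_le => u uN.
  rewrite (@add_step_val _ n u i) -?N_ok // -/x.
  have := Rmult_le_compat_l _ _ _ (p_ge0 _ _ uN) (du_sq_le1 u i).
  rewrite -/q; nra.
by rewrite !big_split /= !rsum_scal p_sum1 mean_increment; lra.
Qed.

Lemma Vfun_increment mu0 (mu : 'I_M -> R) (n : pt M) :
  \rsum_(u | u \in Nk W (c W n)) (p W (c W n) u * Vfun W mu0 mu (add_step n u))
    - Vfun W mu0 mu n =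
  \rsum_(i < M) (vcoef W mu0 mu i *
    (\rsum_(u | u \in Nk W (c W n)) (p W (c W n) u * INR (add_step n u i) ^ 2)
     - INR (n i) ^ 2)).
Proof.
set q := p W (c W n).
have -> : \rsum_(u | u \in Nk W (c W n)) (q u * Vfun W mu0 mu (add_step n u)) =
          \rsum_(i < M) (vcoef W mu0 mu i * \rsum_(u | u \in Nk W (c W n)) (q u * INR (add_step n u i) ^ 2)).
  rewrite /Vfun; under eq_bigr => u _ do rewrite -rsum_scal.
  rewrite exchange_big /=; apply: eq_bigr => i _.
  by rewrite -rsum_scal; apply: eq_bigr => u _; ring.
rewrite /Vfun.
transitivity (\rsum_(i < M) (vcoef W mu0 mu i *
                  \rsum_(u | u \in Nk W (c W n)) (q u * INR (add_step n u i) ^ 2))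
              + (-1) * \rsum_(i < M) (vcoef W mu0 mu i * INR (n i) ^ 2)); first ring.
by rewrite -rsum_scal -big_split /=; apply: eq_bigr => i _; ring.
Qed.

End OneStep.

Section NegativeDrift.

Variables (M : nat) (W : rwalk M).
Hypothesis W_neg : negative_drift W.

(* Each coordinate-wise drift set is bounded and nonempty, and its supremum
   is negative since it is dominated by the global supremum. *)
Lemma coord_drift_sup (i : 'I_M) :
  is_lub (drift_set_i W i) (supR (drift_set_i W i)) /\ supR (drift_set_i W i) < 0.
Proof.
have [Db Dne] := supR_neg_bound W_neg.
have [D_ub D_lub] := supR_lub Db Dne.
have sub : is_upper_bound (drift_set_i W i) (supR (drift_set W)).
  by move=> r [n [n_pos ->]]; apply: D_ub; exists n, i.
have Di_ne : exists x, drift_set_i W i x.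
  by exists (splus W i [ffun=> 1%N] - sminus W i [ffun=> 1%N]), [ffun=> 1%N]; rewrite ffunE.
have Di_sup := supR_lub (ex_intro _ _ sub) Di_ne.
by split=> //; apply: Rle_lt_trans W_neg; apply: (proj2 Di_sup).
Qed.

Variables (mu0 : R) (mu : 'I_M -> R).
Hypothesis mu_star_nonneg : 0 <= mu_star mu0 mu.

Lemma vcoef_ge0 i : 0 <= vcoef W mu0 mu i.
Proof.
have [_ sup_neg] := coord_drift_sup i.
have : 0 < - / supR (drift_set_i W i) by apply/Ropp_0_gt_lt_contravar/Rinv_lt_0_compat.
by rewrite /vcoef /Rdiv; nra.
Qed.

Lemma coord_drift (W_ok : rwalk_ok W) (n : pt M) i :
  vcoef W mu0 mu i *
    (\rsum_(u | u \in Nk W (c W n)) (p W (c W n) u * INR (add_step n u i) ^ 2) - INR (n i) ^ 2)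
  <= vcoef W mu0 mu i - 2 * mu_star mu0 mu * INR (n i).
Proof.
have v_ge0 := vcoef_ge0 i.
have [[sup_ub _] sup_neg] := coord_drift_sup i.
set v := vcoef W mu0 mu i; set d := splus W i n - sminus W i n.
apply: Rle_trans (Rmult_le_compat_l _ _ _ v_ge0 (square_increment W_ok n i)) _.
rewrite -/v -/d.
have [n0 | n_pos] := posnP (n i).
  by rewrite n0 /=; nra.
have vd_le : v * d <= - mu_star mu0 mu.
  have -> : - mu_star mu0 mu = v * supR (drift_set_i W i) by rewrite /v /vcoef; field; lra.
  by apply: Rmult_le_compat_l => //; apply: sup_ub; exists n.
have x_ge0 := pos_INR (n i).
nra.
Qed.

Lemma Vfun_drift (W_ok : rwalk_ok W) (n : pt M) :
  \rsum_(u | u \in Nk W (c W n)) (p W (c W n) u * Vfun W mu0 mu (add_step n u))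
    - Vfun W mu0 mu n
  <= (bconst W mu0 mu - mu0) - 2 * mu_star mu0 mu * (\rsum_(i < M) INR (n i)).
Proof.
rewrite Vfun_increment.
apply: (Rle_trans _ (\rsum_(i < M) (vcoef W mu0 mu i - 2 * mu_star mu0 mu * INR (n i)))).
  by apply: rsum_le => i _; apply: coord_drift.
apply: Req_le; transitivity (\rsum_(i < M) vcoef W mu0 mu i
                + (-2 * mu_star mu0 mu) * (\rsum_(i < M) INR (n i))); last by rewrite /bconst; ring.
by rewrite -rsum_scal -big_split /=; apply: eq_bigr => i _; ring.
Qed.

End NegativeDrift.

Section ExceptionalSet.

Variables (M : nat) (W : rwalk M) (mu0 : R) (mu : 'I_M -> R).
Hypothesis mu_star_gt0 : 0 < mu_star mu0 mu.

(* Outside B some coordinate exceeds b / mu^*, hence so does the total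
   |n| = sum_i n_i; inside B the estimate is trivial. Altogether
   b - mu^* |n| <= b 1_B(n). *)
Lemma B_indicator (n : pt M) :
  bconst W mu0 mu - mu_star mu0 mu * (\rsum_(i < M) INR (n i))
  <= bconst W mu0 mu * (if inB W mu0 mu n then 1 else 0).
Proof.
have x_ge0 i : 0 <= INR (n i) := pos_INR (n i).
have sum_ge0 : 0 <= \rsum_(i < M) INR (n i) by apply: rsum_ge0.
case: ifP => [_ | /negbT /forallPn [j]]; first nra.
case: Rle_dec => // /Rnot_le_lt nj_gt _.
have nj_le : INR (n j) <= \rsum_(i < M) INR (n i) by apply: rsum_term_le.
have : bconst W mu0 mu < mu_star mu0 mu * INR (n j).
  have -> : bconst W mu0 mu = mu_star mu0 mu * (bconst W mu0 mu / mu_star mu0 mu) by field; lra.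
  exact: Rmult_lt_compat_l.
nra.
Qed.

Lemma B_finite : exists s : seq (pt M), forall n, inB W mu0 mu n -> n \in s.
Proof.
have [s box_s] := box_finite M (bconst W mu0 mu / mu_star mu0 mu).
exists s => n /forallP nB; apply: box_s => i.
by move: (nB i); case: Rle_dec.
Qed.

End ExceptionalSet.

Lemma mu_fun_le M mu0 (mu : 'I_M -> R) (n : pt M) :
  mu_fun mu0 mu n <= mu0 + mu_star mu0 mu * (\rsum_(i < M) INR (n i)).
Proof.
rewrite /mu_fun -rsum_scal; apply: Rplus_le_compat_l; apply: rsum_le => i _.
by apply: Rmult_le_compat_r; [apply: pos_INR | apply: mu_star_ge].
Qed.

Theorem lemma4p3 (M : nat) (W : rwalk M) (mu0 : R) (mu : 'I_M -> R) :
  (0 < M)%N ->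
  rwalk_ok W ->
  irreducible W -> aperiodic W -> positive_recurrent W -> negative_drift W ->
  (1 <= mu0) -> (forall i, 0 <= mu i) ->
  (forall i : 'I_M, (0 <= vcoef W mu0 mu i) /\
                    bound (drift_set_i W i) /\ supR (drift_set_i W i) <> 0) /\
  (forall n : pt M, (0 <= Vfun W mu0 mu n)) /\
  (exists s : seq (pt M), forall n, inB W mu0 mu n -> n \in s) /\
  (forall n : pt M,
     (\rsum_(u | u \in Nk W (c W n)) (p W (c W n) u * Vfun W mu0 mu (add_step n u))
        - Vfun W mu0 mu n
      <= - mu_fun mu0 mu n + bconst W mu0 mu * (if inB W mu0 mu n then 1 else 0))).
Proof.
move=> _ W_ok _ _ _ W_neg mu0_ge1 _.
have ms_gt0 : 0 < mu_star mu0 mu by have := mu_star_ge_mu0 mu0 mu; lra.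
have v_ge0 := vcoef_ge0 W_neg (Rlt_le _ _ ms_gt0).
split.
  move=> i; have [[sup_ub _] sup_neg] := coord_drift_sup W_neg i.
  by split; [exact: v_ge0 | split; [exists (supR (drift_set_i W i)); exact: sup_ub | lra]].
split.
  by move=> n; apply: rsum_ge0 => i _; apply: Rmult_le_pos; [exact: v_ge0 | apply: pow2_ge_0].
split; first exact: B_finite.
move=> n.
have := Vfun_drift W_neg (Rlt_le _ _ ms_gt0) W_ok n.
have := B_indicator W ms_gt0 n; have := mu_fun_le mu0 mu n; lra.
Qed.
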